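(* Fix $p\in(1/2,1]$, $C\in\mathbb{R}$, $t>0$, and write $N(t)=\lfloor (p-q)(t-Ct^{1/2})\rfloor$. Consider three ASEPs coupled by the basic coupling: $x$ started from $x_n(0)=-n-N(t)$ ($n\ge1$), $x_n(0)=-n$ ($-N(t)\le n\le0$); $x^A$ started from $x^A_n(0)=-n-N(t)$ ($n\ge1$); $x^B$ started from $x^B_n(0)=-n$ ($n\ge -N(t)$). Let $y_n(s)=\min\{x^A_n(s),x^B_n(s)\}$. Then for all $n\ge1$ and $s\ge0$: in TASEP ($p=1$), $y_n(s)=x_n(s)$; in ASEP (any $p\in(1/2,1]$), $y_n(s)\ge x_n(s)$.
   Context: ASEP on $\mathbb{Z}$ with parameter $p\in(1/2,1]$, $q=1-p$; TASEP is $p=1$. Particles carry integer labels, $x_n(s)$ being the position at time $s$ of the particle labeled $n$, with $x_{n+1}(s)<x_n(s)$. Basic coupling: all processes are constructed from one common family of independent Poisson processes $(P^{i,i+1})_{i\in\mathbb{Z}}$ of rate $p$ and $(P^{i,i-1})_{i\in\mathbb{Z}}$ of rate $q$; whenever $P^{i,i\pm1}$ jumps, in each process a particle at $i$ moves to $i\pm1$ if that site is empty. *)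

From Stdlib Require Export Reals ZArith List.
Open Scope R_scope.

(* Floor of a real number: up r is the unique integer z with r < z <= r+1. *)
Definition Zfloor (r : R) : Z := (up r - 1)%Z.

(* A realization of the family of Poisson processes of the basic coupling:
   [P i j tau] means that the clock P^{i,j} rings at time tau. *)
Definition clocks := Z -> Z -> R -> Prop.

(* Pathwise properties of the Poisson clocks which hold almost surely
   (for any rates): positive ring times, only nearest-neighbour clocks,
   finitely many rings of each clock in bounded time, no two clocks ring
   simultaneously, and for every horizon T there are silent bonds
   (no ring in (0,T] in either direction) arbitrarily far to the left and
   to the right (Harris' construction condition). *)
Definition silent_bond (P : clocks) (i : Z) (T : R) : Prop :=
  forall tau, 0 < tau <= T -> ~ P i (i + 1)%Z tau /\ ~ P (i + 1)%Z i tau.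

Definition good_clocks (P : clocks) : Prop :=
  (forall i j tau, P i j tau -> 0 < tau) /\
  (forall i j tau, P i j tau -> j = (i + 1)%Z \/ j = (i - 1)%Z) /\
  (forall i j T, exists l : list R, forall tau, P i j tau -> tau <= T -> In tau l) /\
  (forall i j i' j' tau, P i j tau -> P i' j' tau -> i = i' /\ j = j') /\
  (forall T m, exists i, (i < m)%Z /\ silent_bond P i T) /\
  (forall T m, exists i, (m < i)%Z /\ silent_bond P i T).

(* [x n s] is the position at time s of the particle with label n; the labels
   are the integers n >= n0 (x_{n+1} < x_n, so label n-1 is the right neighbour
   of n and label n+1 its left neighbour).  [asep_path P n0 x0 x] says that x is
   the ASEP driven by the clocks P (basic coupling) started from x0: at a ring
   of P^{i,i+/-1} at time s, a particle at i (just before s) jumps to i+/-1 if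
   that site is empty (just before s); trajectories are right-continuous with
   left limits and change only according to this rule. *)
Definition asep_path (P : clocks) (n0 : Z) (x0 : Z -> Z) (x : Z -> R -> Z) : Prop :=
  (forall n, (n0 <= n)%Z -> x n 0 = x0 n) /\
  (forall n s, (n0 <= n)%Z -> 0 <= s -> (x (n + 1)%Z s < x n s)%Z) /\
  (forall n s, (n0 <= n)%Z -> 0 <= s ->
     exists eps, 0 < eps /\ forall u, s <= u < s + eps -> x n u = x n s) /\
  (forall n s, (n0 <= n)%Z -> 0 < s ->
     exists eps (a b c : Z), 0 < eps <= s /\
       (forall u, s - eps < u < s ->
          x n u = a /\ x (n + 1)%Z u = c /\ ((n0 <= n - 1)%Z -> x (n - 1)%Z u = b)) /\
       let right_ok := P a (a + 1)%Z s /\ ~ ((n0 <= n - 1)%Z /\ b = (a + 1)%Z) in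
       let left_ok := P a (a - 1)%Z s /\ c <> (a - 1)%Z in
       (right_ok /\ x n s = (a + 1)%Z) \/
       (left_ok /\ x n s = (a - 1)%Z) \/
       (~ right_ok /\ ~ left_ok /\ x n s = a)).

From Stdlib Require Import Reals ZArith List Lia Lra Classical.
Open Scope R_scope.

(* Fix a particle n and a time s.  By Harris' condition there
   is a silent bond Lb (no clock on it rings during (0,s]) to the left of x_n(0).
   No particle crosses a silent bond, so the particles of x to the right of Lb
   form a fixed, finite set of labels; on such a finite set one can argue by
   induction on time ("continuous induction"): a property holding at 0, stable
   just after every time, and inherited by u from all earlier times, holds on
   [0,s].  The inheritance step is a purely local analysis of one clock ring,
   recorded in the lemma [jump_rule_monotone]: under the basic coupling a ring
   preserves the order of two particles with the same label, provided that
   their neighbours are ordered.  This yields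
   - attractiveness: x <= x' at time 0 implies x <= x' later (ASEP), applied
     to x <= x^A and x <= x^B, which gives x_n <= min(x^A_n, x^B_n);
   - in TASEP (no left jumps), the converse: some particle x^A_n or x^B_n stays
     weakly left of x_n, i.e. min(x^A_n, x^B_n) <= x_n.
   The theorem combines the two. *)

Definition just_after (u : R) (Q : R -> Prop) : Prop :=
  exists eps, 0 < eps /\ forall v, u <= v < u + eps -> Q v.

Definition just_before (u : R) (Q : R -> Prop) : Prop :=
  exists eps, 0 < eps <= u /\ forall v, u - eps < v < u -> Q v.

(* Induction on a real time interval [0,T], proved by considering the supremum
   of the times up to which [Q] holds. *)
Lemma continuous_induction (Q : R -> Prop) (T : R) :
  0 <= T -> Q 0 ->
  (forall u, 0 <= u < T -> Q u -> just_after u Q) ->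
  (forall u, 0 < u <= T -> (forall v, 0 <= v < u -> Q v) -> Q u) ->
  forall u, 0 <= u <= T -> Q u.
Proof.
  intros HT H0 Hright Hleft.
  set (E := fun v => 0 <= v <= T /\ forall w, 0 <= w <= v -> Q w).
  assert (E0 : E 0).
  { split; [lra|]. intros w Hw. replace w with 0 by lra. exact H0. }
  destruct (completeness E) as [S [HS_ub HS_least]].
  { exists T. intros v [Hv _]. lra. }
  { exists 0. exact E0. }
  assert (S_ge0 : 0 <= S) by (apply HS_ub; exact E0).
  assert (S_leT : S <= T) by (apply HS_least; intros v [Hv _]; lra).
  assert (below_S : forall w, 0 <= w < S -> Q w).
  { intros w Hw. apply NNPP. intros HQw.
    enough (S <= w) by lra.
    apply HS_least. intros v [_ Hv]. destruct (Rle_lt_dec v w) as [|Hwv]; [lra|].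
    exfalso. apply HQw, Hv. lra. }
  assert (upto_S : forall w, 0 <= w <= S -> Q w).
  { intros w Hw. destruct (Rlt_le_dec w S) as [|HSw]; [apply below_S; lra|].
    replace w with S by lra. destruct (Req_dec S 0) as [->|HS0]; [exact H0|].
    apply Hleft; [lra|exact below_S]. }
  assert (S_eq_T : S = T).
  { destruct (Rlt_le_dec S T) as [HST|]; [exfalso|lra].
    destruct (Hright S ltac:(lra) (upto_S S ltac:(lra))) as [eps [Heps Hafter]].
    pose proof (Rmin_l (S + eps / 2) T). pose proof (Rmin_r (S + eps / 2) T).
    set (v := Rmin (S + eps / 2) T) in *.
    assert (HSv : S < v) by (apply Rmin_glb_lt; lra).
    assert (Ev : E v).
    { split; [lra|]. intros w Hw. destruct (Rle_lt_dec w S); [apply upto_S; lra|].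
      apply Hafter. lra. }
    pose proof (HS_ub v Ev). lra. }
  intros u Hu. apply upto_S. lra.
Qed.

Lemma just_after_mono (u : R) (Q1 Q2 : R -> Prop) :
  (forall v, Q1 v -> Q2 v) -> just_after u Q1 -> just_after u Q2.
Proof. intros H12 [eps [Heps H]]. exists eps. split; [exact Heps|]. auto. Qed.

Lemma just_after_and (u : R) (Q1 Q2 : R -> Prop) :
  just_after u Q1 -> just_after u Q2 -> just_after u (fun v => Q1 v /\ Q2 v).
Proof.
  intros [e1 [He1 H1]] [e2 [He2 H2]]. exists (Rmin e1 e2).
  split; [apply Rmin_pos; lra|]. intros v Hv.
  pose proof (Rmin_l e1 e2). pose proof (Rmin_r e1 e2).
  split; [apply H1|apply H2]; lra.
Qed.

Lemma just_after_guard (C : Prop) (u : R) (Q : R -> Prop) :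
  (C -> just_after u Q) -> just_after u (fun v => C -> Q v).
Proof.
  intros H. destruct (classic C) as [HC|HnC].
  - apply (just_after_mono u Q); auto.
  - exists 1. split; [lra|]. tauto.
Qed.

Lemma just_after_labels (u : R) (Q : Z -> R -> Prop) (lo : Z) (k : nat) :
  (forall m, (lo <= m < lo + Z.of_nat k)%Z -> just_after u (Q m)) ->
  just_after u (fun v => forall m, (lo <= m < lo + Z.of_nat k)%Z -> Q m v).
Proof.
  induction k as [|k IH]; intros Hm.
  - exists 1. split; [lra|]. intros v _ m Hm'. lia.
  - assert (Hlast : just_after u (Q (lo + Z.of_nat k)%Z)) by (apply Hm; lia).
    assert (Hinit : just_after u (fun v => forall m, (lo <= m < lo + Z.of_nat k)%Z -> Q m v))
      by (apply IH; intros m Hm'; apply Hm; lia).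
    refine (just_after_mono u _ _ _ (just_after_and u _ _ Hinit Hlast)).
    intros v [Hall Hv] m Hm'.
    destruct (Z.eq_dec m (lo + Z.of_nat k)) as [->|]; [exact Hv|apply Hall; lia].
Qed.

Lemma just_before_and (u : R) (Q1 Q2 : R -> Prop) :
  just_before u Q1 -> just_before u Q2 -> just_before u (fun v => Q1 v /\ Q2 v).
Proof.
  intros [e1 [He1 H1]] [e2 [He2 H2]]. exists (Rmin e1 e2).
  pose proof (Rmin_l e1 e2). pose proof (Rmin_r e1 e2).
  split; [split; [apply Rmin_pos|]; lra|]. intros v Hv.
  split; [apply H1|apply H2]; lra.
Qed.

Lemma just_before_guard (C : Prop) (u : R) (Q : R -> Prop) :
  0 < u -> (C -> just_before u Q) -> just_before u (fun v => C -> Q v).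
Proof.
  intros Hu H. destruct (classic C) as [HC|HnC].
  - destruct (H HC) as [eps [Heps Hv]]. exists eps. auto.
  - exists u. split; [lra|]. tauto.
Qed.

Lemma just_before_pick (u : R) (Q : R -> Prop) :
  just_before u Q -> exists v, 0 <= v < u /\ Q v.
Proof. intros [eps [Heps H]]. exists (u - eps / 2). split; [lra|]. apply H. lra. Qed.

Lemma good_clocks_exclusive (P : clocks) (u : R) (i j : Z) :
  good_clocks P -> P i (i + 1)%Z u -> P j (j - 1)%Z u -> False.
Proof. intros (_ & _ & _ & Huniq & _) Hi Hj. destruct (Huniq _ _ _ _ _ Hi Hj). lia. Qed.

Lemma silent_no_right (P : clocks) (i a : Z) (T u : R) :
  silent_bond P i T -> 0 < u <= T -> P a (a + 1)%Z u -> a <> i.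
Proof. intros Hs Hu Hp ->. exact (proj1 (Hs u Hu) Hp). Qed.

Lemma silent_no_left (P : clocks) (i a : Z) (T u : R) :
  silent_bond P i T -> 0 < u <= T -> P a (a - 1)%Z u -> a <> (i + 1)%Z.
Proof.
  intros Hs Hu Hp ->. replace (i + 1 - 1)%Z with i in Hp by ring.
  exact (proj2 (Hs u Hu) Hp).
Qed.

Definition right_free (n0 : Z) (z : Z -> R -> Z) (m : Z) (v : R) : Prop :=
  ~ ((n0 <= m - 1)%Z /\ z (m - 1)%Z v = (z m v + 1)%Z).

Definition left_free (z : Z -> R -> Z) (m : Z) (v : R) : Prop :=
  z (m + 1)%Z v <> (z m v - 1)%Z.

Definition jump_rule (P : clocks) (u : R) (a : Z) (rfree lfree : Prop) (a' : Z) : Prop :=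
  ((P a (a + 1)%Z u /\ rfree) /\ a' = (a + 1)%Z) \/
  ((P a (a - 1)%Z u /\ lfree) /\ a' = (a - 1)%Z) \/
  (~ (P a (a + 1)%Z u /\ rfree) /\ ~ (P a (a - 1)%Z u /\ lfree) /\ a' = a).

Lemma jump_rule_displacement (P : clocks) (u : R) (a : Z) (rfree lfree : Prop) (a' : Z) :
  jump_rule P u a rfree lfree a' ->
  a' = a \/ (a' = (a + 1)%Z /\ P a (a + 1)%Z u) \/ (a' = (a - 1)%Z /\ P a (a - 1)%Z u).
Proof. unfold jump_rule. tauto. Qed.

Lemma jump_rule_monotone (P : clocks) (u : R) (a a' : Z) (rf lf rf' lf' : Prop) (b b' : Z) :
  (forall i j, P i (i + 1)%Z u -> P j (j - 1)%Z u -> False) ->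
  (a <= a')%Z ->
  (a = a' -> P a (a + 1)%Z u -> ~ rf' -> ~ rf) ->
  (a = a' -> P a (a - 1)%Z u -> ~ lf -> ~ lf') ->
  jump_rule P u a rf lf b -> jump_rule P u a' rf' lf' b' -> (b <= b')%Z.
Proof.
  intros Hexcl Hle Hright Hleft Hrule Hrule'.
  destruct Hrule as [[[Hr Hrf] ->]|[[[Hl Hlf] ->]|[Hnr [Hnl ->]]]];
  destruct Hrule' as [[[Hr' Hrf'] ->]|[[[Hl' Hlf'] ->]|[Hnr' [Hnl' ->]]]];
  try lia.
  - exfalso. exact (Hexcl a a' Hr Hl').
  - destruct (Z.eq_dec a a') as [<-|]; [|lia].
    exfalso. apply (Hright eq_refl Hr); [|exact Hrf]. intros Hrf'. tauto.
  - destruct (Z.eq_dec a a') as [<-|]; [|lia].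
    exfalso. apply (Hleft eq_refl Hl'); [|exact Hlf']. intros Hlf. tauto.
Qed.

Lemma asep_order (P : clocks) (n0 : Z) (z0 : Z -> Z) (z : Z -> R -> Z) (m : Z) (v : R) :
  asep_path P n0 z0 z -> (n0 <= m - 1)%Z -> 0 <= v -> (z m v < z (m - 1)%Z v)%Z.
Proof.
  intros (_ & Hord & _) Hm Hv. pose proof (Hord (m - 1)%Z v Hm Hv) as H.
  replace (m - 1 + 1)%Z with m in H by ring. exact H.
Qed.

Lemma asep_right_const (P : clocks) (n0 : Z) (z0 : Z -> Z) (z : Z -> R -> Z) (m : Z) (u : R) :
  asep_path P n0 z0 z -> (n0 <= m)%Z -> 0 <= u -> just_after u (fun v => z m v = z m u).
Proof. intros (_ & _ & Hconst & _) Hm Hu. exact (Hconst m u Hm Hu). Qed.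

Lemma asep_last_step (P : clocks) (n0 : Z) (z0 : Z -> Z) (z : Z -> R -> Z) (m : Z) (u : R) :
  asep_path P n0 z0 z -> (n0 <= m)%Z -> 0 < u ->
  just_before u (fun v => jump_rule P u (z m v) (right_free n0 z m v) (left_free z m v) (z m u)).
Proof.
  intros (_ & _ & _ & Hjump) Hm Hu.
  destruct (Hjump m u Hm Hu) as [eps [a [b [c [Heps [Hbefore Hrule]]]]]].
  exists eps. split; [exact Heps|]. intros v Hv.
  destruct (Hbefore v Hv) as [Ha [Hc Hb]].
  assert (Hblock : ((n0 <= m - 1)%Z /\ b = (a + 1)%Z) <->
                   ((n0 <= m - 1)%Z /\ z (m - 1)%Z v = (a + 1)%Z)).
  { split; intros [H1 H2]; split; try exact H1;
      [rewrite (Hb H1) | rewrite <- (Hb H1)]; exact H2. }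
  unfold jump_rule, right_free, left_free. rewrite Ha, Hc, <- Hblock. exact Hrule.
Qed.

Lemma asep_right_const_if (P : clocks) (n0 : Z) (z0 : Z -> Z) (z : Z -> R -> Z) (m : Z) (u : R) :
  asep_path P n0 z0 z -> 0 <= u -> just_after u (fun v => (n0 <= m)%Z -> z m v = z m u).
Proof.
  intros Hz Hu. apply just_after_guard. intros Hm. exact (asep_right_const P n0 z0 z m u Hz Hm Hu).
Qed.

Lemma asep_last_step_if (P : clocks) (n0 : Z) (z0 : Z -> Z) (z : Z -> R -> Z) (m : Z) (u : R) :
  asep_path P n0 z0 z -> 0 < u ->
  just_before u (fun v => (n0 <= m)%Z ->
    jump_rule P u (z m v) (right_free n0 z m v) (left_free z m v) (z m u)).
Proof.
  intros Hz Hu. apply just_before_guard; [exact Hu|]. intros Hm.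
  exact (asep_last_step P n0 z0 z m u Hz Hm Hu).
Qed.

Lemma silent_bond_not_crossed (P : clocks) (n0 : Z) (z0 : Z -> Z) (z : Z -> R -> Z)
    (T : R) (Lb m : Z) :
  asep_path P n0 z0 z -> silent_bond P Lb T -> (n0 <= m)%Z ->
  forall u, 0 <= u <= T -> ((Lb < z m u)%Z <-> (Lb < z m 0%R)%Z).
Proof.
  intros Hz Hs Hm u Hu. assert (HT : 0 <= T) by lra. revert u Hu.
  apply (continuous_induction (fun u => (Lb < z m u)%Z <-> (Lb < z m 0%R)%Z) T HT); [tauto| |].
  - intros u Hu Hinv.
    refine (just_after_mono u _ _ _ (asep_right_const P n0 z0 z m u Hz Hm ltac:(lra))).
    intros v ->. exact Hinv.
  - intros u Hu IH.
    destruct (just_before_pick u _ (asep_last_step P n0 z0 z m u Hz Hm ltac:(lra)))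
      as [v [Hv Hrule]].
    specialize (IH v Hv).
    destruct (jump_rule_displacement _ _ _ _ _ _ Hrule) as [->|[[-> Hr]|[-> Hl]]].
    + exact IH.
    + pose proof (silent_no_right P Lb _ T u Hs Hu Hr). lia.
    + pose proof (silent_no_left P Lb _ T u Hs Hu Hl). lia.
Qed.

Lemma window_induction (T : R) (lo K : Z) (Good : Z -> R -> Prop) :
  0 <= T ->
  (forall m, (lo <= m <= K)%Z -> Good m 0) ->
  (forall u m, 0 <= u < T -> (lo <= m <= K)%Z -> Good m u -> just_after u (Good m)) ->
  (forall u m, 0 < u <= T -> (lo <= m <= K)%Z ->
     (forall v m', 0 <= v < u -> (lo <= m' <= K)%Z -> Good m' v) -> Good m u) ->
  forall u m, 0 <= u <= T -> (lo <= m <= K)%Z -> Good m u.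
Proof.
  intros HT H0 Hright Hleft.
  set (k := Z.to_nat (K - lo + 1)).
  assert (Hk : forall m, (lo <= m <= K)%Z <-> (lo <= m < lo + Z.of_nat k)%Z)
    by (intro; unfold k; lia).
  intros u m Hu. revert u Hu m.
  apply (continuous_induction (fun u => forall m, (lo <= m <= K)%Z -> Good m u) T HT H0).
  - intros u Hu Hall.
    assert (Hlabels : just_after u (fun v => forall m, (lo <= m < lo + Z.of_nat k)%Z -> Good m v)).
    { apply just_after_labels. intros m Hm. apply Hright; [lra|apply Hk, Hm|apply Hall, Hk, Hm]. }
    refine (just_after_mono u _ _ _ Hlabels).
    intros v Hv m Hm. apply Hv, Hk, Hm.
  - intros u Hu IH m Hm. apply Hleft; auto.
Qed.

(* Process x' carries fewer
   labels than x (n0 <= n0'); particles of x that are right neighbours of a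
   particle of x' are compared by induction at label m-1, left neighbours at
   label m+1, the latter being right of Lb since a left jump never uses the
   silent bond. *)
Lemma attractiveness (P : clocks) (n0 n0' : Z) (x0 x0' : Z -> Z) (x x' : Z -> R -> Z)
    (T : R) (Lb K : Z) :
  good_clocks P -> asep_path P n0 x0 x -> asep_path P n0' x0' x' -> (n0 <= n0')%Z ->
  silent_bond P Lb T ->
  (forall m, (n0' <= m)%Z -> (x m 0%R <= x' m 0%R)%Z) ->
  (forall m, (n0 <= m)%Z -> (Lb < x m 0%R)%Z -> (m <= K)%Z) ->
  forall u m, 0 <= u <= T -> (n0' <= m)%Z -> (Lb < x m u)%Z -> (x m u <= x' m u)%Z.
Proof.
  intros G Hx Hx' Hn Hs Hinit HK u m Hu Hm Hwin.
  assert (Hstay : forall k v, (n0 <= k)%Z -> 0 <= v <= T -> (Lb < x k v)%Z <-> (Lb < x k 0%R)%Z)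
    by (intros k v Hk Hv; exact (silent_bond_not_crossed P n0 x0 x T Lb k Hx Hs Hk v Hv)).
  assert (HmK : (m <= K)%Z) by (apply HK; [lia|apply (Hstay m u); [lia|exact Hu|exact Hwin]]).
  revert Hwin.
  apply (window_induction T n0' K (fun m v => (Lb < x m v)%Z -> (x m v <= x' m v)%Z));
    [lra| |intros v k Hv Hk Hgood| intros v k Hv Hk IH Hwin_v|exact Hu|lia].
  - intros k Hk _. apply Hinit. lia.
  - refine (just_after_mono v _ _ _ (just_after_and v _ _
      (asep_right_const P n0 x0 x k v Hx ltac:(lia) ltac:(lra))
      (asep_right_const P n0' x0' x' k v Hx' ltac:(lia) ltac:(lra)))).
    intros w [-> ->]. exact Hgood.
  - destruct (just_before_pick v _ (just_before_and v _ _
      (asep_last_step P n0 x0 x k v Hx ltac:(lia) ltac:(lra))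
      (asep_last_step P n0' x0' x' k v Hx' ltac:(lia) ltac:(lra)))) as [w [Hw [Hrule Hrule']]].
    assert (Hwin_w : forall j, (n0 <= j)%Z -> (Lb < x j v)%Z -> (Lb < x j w)%Z).
    { intros j Hj Hjv. apply (Hstay j w Hj ltac:(lra)), (Hstay j v Hj ltac:(lra)), Hjv. }
    refine (jump_rule_monotone P v (x k w) (x' k w) _ _ _ _ _ _
              (fun i j => good_clocks_exclusive P v i j G) _ _ _ Hrule Hrule').
    + apply IH; [lra|lia|apply Hwin_w; [lia|exact Hwin_v]].
    + intros Heq _ Hblocked' Hfree. unfold right_free in *. apply NNPP in Hblocked'.
      destruct Hblocked' as [Hk1 Hnext']. apply Hfree. split; [lia|].
      pose proof (asep_order P n0 x0 x k w Hx ltac:(lia) ltac:(lra)) as Hord.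
      assert (Hle : (x (k - 1)%Z w <= x' (k - 1)%Z w)%Z).
      { apply IH; [lra|lia|]. pose proof (Hwin_w k ltac:(lia) Hwin_v). lia. }
      lia.
    + intros Heq Hclock Hblocked Hfree'. unfold left_free in *. apply NNPP in Hblocked.
      apply Hfree'.
      pose proof (silent_no_left P Lb _ T v Hs ltac:(lra) Hclock) as Hnot_edge.
      pose proof (Hwin_w k ltac:(lia) Hwin_v).
      assert (Hnext_win : (Lb < x (k + 1)%Z w)%Z) by lia.
      assert (Hnext_K : (k + 1 <= K)%Z)
        by (apply HK; [lia|apply (Hstay (k + 1)%Z w); [lia|lra|exact Hnext_win]]).
      assert (Hle : (x (k + 1)%Z w <= x' (k + 1)%Z w)%Z) by (apply IH; [lra|lia|exact Hnext_win]).
      pose proof (asep_order P n0' x0' x' (k + 1)%Z w Hx' ltac:(lia) ltac:(lra)) as Hord.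
      replace (k + 1 - 1)%Z with k in Hord by ring.
      lia.
Qed.

Definition weakly_left_of (nz : Z) (z x : Z -> R -> Z) (m : Z) (v : R) : Prop :=
  (nz <= m)%Z /\ (z m v <= x m v)%Z.

Definition blocked_jump (P : clocks) (u : R) (n0 : Z) (x : Z -> R -> Z) (m : Z) (v : R) : Prop :=
  P (x m v) (x m v + 1)%Z u /\ ~ right_free n0 x m v.

Lemma tasep_candidate_step (P : clocks) (u v : R) (n0 nz : Z) (x z : Z -> R -> Z) (m : Z) :
  (forall i, ~ P i (i - 1)%Z u) ->
  jump_rule P u (x m v) (right_free n0 x m v) (left_free x m v) (x m u) ->
  ((nz <= m)%Z -> jump_rule P u (z m v) (right_free nz z m v) (left_free z m v) (z m u)) ->
  ((nz <= m - 1)%Z -> (z m v < z (m - 1)%Z v)%Z) ->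
  (blocked_jump P u n0 x m v /\ weakly_left_of nz z x (m - 1)%Z v) \/
  (~ blocked_jump P u n0 x m v /\ weakly_left_of nz z x m v) ->
  weakly_left_of nz z x m u.
Proof.
  intros Hnoleft Hrule Hrule_z Hord Hcase.
  assert (Hexcl : forall i j, P i (i + 1)%Z u -> P j (j - 1)%Z u -> False)
    by (intros i j _ Hj; exact (Hnoleft j Hj)).
  assert (Hnz : (nz <= m)%Z) by (unfold weakly_left_of in Hcase; lia).
  split; [exact Hnz|].
  refine (jump_rule_monotone P u (z m v) (x m v) _ _ _ _ _ _ Hexcl _ _ _ (Hrule_z Hnz) Hrule);
    [| |intros _ Hl; destruct (Hnoleft _ Hl)];
    unfold weakly_left_of, blocked_jump, right_free in *;
    destruct Hcase as [[[Hclock Hblocked] [Hnz1 Hle1]]|[Hfree [_ Hle]]].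
  - apply NNPP in Hblocked. specialize (Hord Hnz1). lia.
  - exact Hle.
  - intros Heq _ _ Hzfree. apply NNPP in Hblocked. apply Hzfree.
    specialize (Hord Hnz1). split; [exact Hnz1|lia].
  - intros Heq Hclock Hblocked. exfalso. apply Hfree.
    split; [rewrite <- Heq; exact Hclock|exact Hblocked].
Qed.

Lemma tasep_left_of_min (P : clocks) (n0 nA nB : Z) (x0 xA0 xB0 : Z -> Z)
    (x xA xB : Z -> R -> Z) (T : R) (Lb K : Z) :
  (forall i tau, ~ P i (i - 1)%Z tau) ->
  asep_path P n0 x0 x -> asep_path P nA xA0 xA -> asep_path P nB xB0 xB ->
  silent_bond P Lb T ->
  (forall m, (n0 <= m)%Z -> weakly_left_of nA xA x m 0 \/ weakly_left_of nB xB x m 0) ->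
  (forall m, (n0 <= m)%Z -> (Lb < x m 0%R)%Z -> (m <= K)%Z) ->
  forall u m, 0 <= u <= T -> (n0 <= m)%Z -> (Lb < x m u)%Z ->
    weakly_left_of nA xA x m u \/ weakly_left_of nB xB x m u.
Proof.
  intros Hnoleft Hx HxA HxB Hs Hinit HK u m Hu Hm Hwin.
  assert (Hstay : forall k v, (n0 <= k)%Z -> 0 <= v <= T -> (Lb < x k v)%Z <-> (Lb < x k 0%R)%Z)
    by (intros k v Hk Hv; exact (silent_bond_not_crossed P n0 x0 x T Lb k Hx Hs Hk v Hv)).
  assert (HmK : (m <= K)%Z) by (apply HK; [lia|apply (Hstay m u); [lia|exact Hu|exact Hwin]]).
  revert Hwin.
  apply (window_induction T n0 K
           (fun m v => (Lb < x m v)%Z -> weakly_left_of nA xA x m v \/ weakly_left_of nB xB x m v));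
    [lra| |intros v k Hv Hk Hgood| intros v k Hv Hk IH Hwin_v|exact Hu|lia].
  - intros k Hk _. apply Hinit. lia.
  - refine (just_after_mono v _ _ _ (just_after_and v _ _
      (asep_right_const P n0 x0 x k v Hx ltac:(lia) ltac:(lra))
      (just_after_and v _ _ (asep_right_const_if P nA xA0 xA k v HxA ltac:(lra))
                            (asep_right_const_if P nB xB0 xB k v HxB ltac:(lra))))).
    unfold weakly_left_of. intros w [Ex [EA EB]] Hwin_w. rewrite Ex in *.
    destruct (Hgood Hwin_w) as [[HnA Hle]|[HnB Hle]];
      [left; rewrite (EA HnA)|right; rewrite (EB HnB)]; tauto.
  - destruct (just_before_pick v _ (just_before_and v _ _
      (asep_last_step P n0 x0 x k v Hx ltac:(lia) ltac:(lra))
      (just_before_and v _ _ (asep_last_step_if P nA xA0 xA k v HxA ltac:(lra))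
                             (asep_last_step_if P nB xB0 xB k v HxB ltac:(lra)))))
      as [w [Hw [Hrule [HruleA HruleB]]]].
    assert (Hwin_w : (Lb < x k w)%Z).
    { apply (Hstay k w ltac:(lia) ltac:(lra)), (Hstay k v ltac:(lia) ltac:(lra)), Hwin_v. }
    assert (Hcand : (blocked_jump P v n0 x k w /\
                       (weakly_left_of nA xA x (k - 1)%Z w \/ weakly_left_of nB xB x (k - 1)%Z w)) \/
                    (~ blocked_jump P v n0 x k w /\
                       (weakly_left_of nA xA x k w \/ weakly_left_of nB xB x k w))).
    { destruct (classic (blocked_jump P v n0 x k w)) as [Hblk|Hfree]; [left|right];
        split; try assumption.
      - destruct Hblk as [_ Hnext]. unfold right_free in Hnext. apply NNPP in Hnext.
        apply IH; [lra|lia|lia].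
      - apply IH; [lra|lia|exact Hwin_w]. }
    pose proof (fun nz z0 z (Hz : asep_path P nz z0 z) (Hnz : (nz <= k - 1)%Z) =>
                  asep_order P nz z0 z k w Hz Hnz ltac:(lra)) as Hord.
    destruct Hcand as [[Hblk [HA|HB]]|[Hfree [HA|HB]]];
      [left|right|left|right];
      eapply tasep_candidate_step; eauto.
Qed.

Theorem proposition2 (p C t : R) (P : clocks) (x xA xB : Z -> R -> Z) :
  1 / 2 < p <= 1 -> 0 < t ->
  let q := 1 - p in
  let Nt := Zfloor ((p - q) * (t - C * sqrt t)) in
  (0 <= Nt)%Z ->
  good_clocks P ->
  (* rate q = 0 in TASEP: the left clocks never ring *)
  (p = 1 -> forall i tau, ~ P i (i - 1)%Z tau) ->
  asep_path P (- Nt)%Z (fun n => if (1 <=? n)%Z then (- n - Nt)%Z else (- n)%Z) x ->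
  asep_path P 1%Z (fun n => (- n - Nt)%Z) xA ->
  asep_path P (- Nt)%Z (fun n => (- n)%Z) xB ->
  forall (n : Z) (s : R), (1 <= n)%Z -> 0 <= s ->
    (p = 1 -> Z.min (xA n s) (xB n s) = x n s) /\
    (x n s <= Z.min (xA n s) (xB n s))%Z.
Proof.
  intros _ _ q Nt HNt G Htasep Hx HxA HxB n s Hn Hs.
  clearbody Nt.
  assert (Hx0 : forall m, (- Nt <= m)%Z -> x m 0%R = if (1 <=? m)%Z then (- m - Nt)%Z else (- m)%Z)
    by exact (proj1 Hx).
  assert (HxA0 : forall m, (1 <= m)%Z -> xA m 0%R = (- m - Nt)%Z) by exact (proj1 HxA).
  assert (HxB0 : forall m, (- Nt <= m)%Z -> xB m 0%R = (- m)%Z) by exact (proj1 HxB).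
  assert (Hx0_le : forall m, (- Nt <= m)%Z -> (x m 0%R <= - m)%Z).
  { intros m Hm. rewrite (Hx0 m Hm). destruct (Z.leb_spec 1 m); lia. }
  (* a silent bond Lb left of particle n; only labels m <= -Lb start right of it *)
  pose proof G as (_ & _ & _ & _ & Hsilent_left & _).
  destruct (Hsilent_left s (x n 0%R)) as [Lb [HLb Hs_Lb]].
  assert (HK : forall m, (- Nt <= m)%Z -> (Lb < x m 0%R)%Z -> (m <= - Lb)%Z).
  { intros m Hm Hwin. pose proof (Hx0_le m Hm). lia. }
  assert (Hwin : (Lb < x n s)%Z).
  { apply (silent_bond_not_crossed P (- Nt) _ x s Lb n Hx Hs_Lb ltac:(lia) s ltac:(lra)). exact HLb. }
  assert (HleA : (x n s <= xA n s)%Z).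
  { refine (attractiveness P (- Nt) 1 _ _ x xA s Lb (- Lb) G Hx HxA ltac:(lia) Hs_Lb _ HK
              s n ltac:(lra) Hn Hwin).
    intros m Hm. rewrite (Hx0 m ltac:(lia)), (HxA0 m Hm). destruct (Z.leb_spec 1 m); lia. }
  assert (HleB : (x n s <= xB n s)%Z).
  { refine (attractiveness P (- Nt) (- Nt) _ _ x xB s Lb (- Lb) G Hx HxB ltac:(lia) Hs_Lb _ HK
              s n ltac:(lra) ltac:(lia) Hwin).
    intros m Hm. rewrite (HxB0 m Hm). exact (Hx0_le m Hm). }
  split; [|lia].
  intros Hp1.
  assert (Hmin : weakly_left_of 1 xA x n s \/ weakly_left_of (- Nt) xB x n s).
  { refine (tasep_left_of_min P (- Nt) 1 (- Nt) _ _ _ x xA xB s Lb (- Lb) (Htasep Hp1)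
              Hx HxA HxB Hs_Lb _ HK s n ltac:(lra) ltac:(lia) Hwin).
    intros m Hm. unfold weakly_left_of. rewrite (Hx0 m Hm), (HxB0 m Hm).
    destruct (Z.leb_spec 1 m); [left; rewrite (HxA0 m ltac:(lia))|right]; lia. }
  unfold weakly_left_of in Hmin. lia.
Qed.
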